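(* Let $R$ be a commutative ring and $I$ an invertible fractional ideal of $R$. If $M_1,\ldots,M_n$ are $R$-submodules of $T(R)$ with $I=\bigcup_{k=1}^n M_k$, then $I=M_k$ for some $k$.
   Context: All rings are commutative with $1\neq 0$. $T(R)$ denotes the total ring of fractions of $R$. A fractional ideal of $R$ is an $R$-submodule $I\subseteq T(R)$ such that $aI\subseteq R$ for some nonzerodivisor $a\in R$; for fractional ideals $I,J$, $IJ$ is the set of finite sums $\sum x_iy_i$ with $x_i\in I$, $y_i\in J$. A fractional ideal $I$ is invertible if $IJ=R$ for some fractional ideal $J$. *)

From mathcomp Require Import all_boot all_algebra.
Set Implicit Arguments. Unset Strict Implicit. Unset Printing Implicit Defensive.
Import GRing.Theory.
Local Open Scope ring_scope.

Definition nonzerodivisor (R : comNzRingType) (s : R) : Prop :=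
  forall r : R, r * s = 0 -> r = 0.

(* This characterizes T(R) = S^{-1}R (S = nonzerodivisors)
   up to unique R-isomorphism. *)
Definition total_ring_of_fractions (R : comNzRingType) (T : comUnitRingType)
    (f : {rmorphism R -> T}) : Prop :=
  [/\ injective f,
      (forall s : R, nonzerodivisor s -> f s \is a GRing.unit) &
      (forall t : T, exists a s : R, nonzerodivisor s /\ t = f a / f s)].

Definition Rsubmodule (R : comNzRingType) (T : comUnitRingType)
    (f : {rmorphism R -> T}) (M : T -> Prop) : Prop :=
  [/\ M 0,
      (forall x y, M x -> M y -> M (x + y)) &
      (forall (r : R) x, M x -> M (f r * x))].

Definition fractional_ideal (R : comNzRingType) (T : comUnitRingType)
    (f : {rmorphism R -> T}) (I : T -> Prop) : Prop :=
  Rsubmodule f I /\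
  exists a : R, nonzerodivisor a /\
    forall x, I x -> exists r : R, f a * x = f r.

Definition ideal_prod (T : comUnitRingType) (I J : T -> Prop) : T -> Prop :=
  fun z => exists (n : nat) (xs ys : 'I_n -> T),
    [/\ forall i, I (xs i), forall i, J (ys i) & z = \sum_(i < n) xs i * ys i].

Definition invertible_fractional_ideal (R : comNzRingType) (T : comUnitRingType)
    (f : {rmorphism R -> T}) (I : T -> Prop) : Prop :=
  fractional_ideal f I /\
  exists J : T -> Prop, fractional_ideal f J /\
    forall z, ideal_prod I J z <-> exists r : R, z = f r.

(* For a submodule M of T(R), the colon ideal (M : I) = {r | rI ⊆ M} is all of R
   exactly when I ⊆ M.  With J the inverse of I, the submodules
   S(A) = {x | xJ ⊆ A} of T(R) satisfy AI ⊆ S(A), and S(A) does not contain I when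
   the ideal A is proper, since 1 ∈ IJ.  If no M_k contains I, the x ∈ I lying in
   M_k lie in S((M_k : I)), so it suffices that I is not covered by the S(A_k) of
   finitely many proper ideals A_k.  This follows by induction on their number:
   if two of them have a proper sum, replace them by it; otherwise the last one
   is comaximal with all others, which yields e ∈ ∩_{k<n} A_k with 1 - e ∈ A_n,
   and an element x avoiding the first n - 1 sets can be corrected to x + e w
   with w ∈ I outside S(A_n). *)
From mathcomp Require Import all_boot all_algebra.
From mathcomp Require Import ring.
From Stdlib Require Import Classical.
Set Implicit Arguments. Unset Strict Implicit. Unset Printing Implicit Defensive.
Import GRing.Theory.
Local Open Scope ring_scope.

Section Ideals.

Variable R : comNzRingType.

Definition is_ideal (A : R -> Prop) : Prop :=
  [/\ A 0, (forall a b, A a -> A b -> A (a + b)) & (forall r a, A a -> A (r * a))].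

Definition ideal_add (A B : R -> Prop) : R -> Prop :=
  fun z => exists a b, [/\ A a, B b & z = a + b].

Lemma ideal_add_ideal A B : is_ideal A -> is_ideal B -> is_ideal (ideal_add A B).
Proof.
case=> A0 AD AM [B0 BD BM]; split.
- by exists 0, 0; rewrite addr0.
- move=> _ _ [a [b [Aa Bb ->]]] [a' [b' [Aa' Bb' ->]]].
  by exists (a + a'), (b + b'); rewrite addrACA; split; [apply: AD|apply: BD|].
- move=> r _ [a [b [Aa Bb ->]]].
  by exists (r * a), (r * b); rewrite mulrDr; split; [apply: AM|apply: BM|].
Qed.

Lemma ideal_addl A B a : is_ideal B -> A a -> ideal_add A B a.
Proof. by case=> B0 _ _ Aa; exists a, 0; rewrite addr0. Qed.

Lemma ideal_addr A B b : is_ideal A -> B b -> ideal_add A B b.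
Proof. by case=> A0 _ _ Bb; exists 0, b; rewrite add0r. Qed.

Lemma comaximal_family n (A : 'I_n -> R -> Prop) (B : R -> Prop) :
  (forall k, is_ideal (A k)) -> is_ideal B -> (forall k, ideal_add (A k) B 1) ->
  exists e, (forall k, A k e) /\ B (1 - e).
Proof.
move=> idA [B0 BD BM] comax.
have /fin_all_exists [a Ba] : forall k, exists a, A k a /\ B (1 - a).
  move=> k; have [a [b [Aa Bb e1]]] := comax k.
  by exists a; rewrite e1 addrAC subrr add0r.
exists (\prod_(k < n) a k); split.
  move=> k; rewrite (bigD1 k) //= mulrC.
  by have [_ _ AM] := idA k; apply: AM; apply: (Ba k).1.
apply: (big_ind (fun p => B (1 - p))); first by rewrite subrr.
- move=> p q Bp Bq.
  have -> : 1 - p * q = (1 - p) + p * (1 - q) by ring.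
  exact: BD _ _ Bp (BM _ _ Bq).
- by move=> k _; apply: (Ba k).2.
Qed.

End Ideals.

Section Avoidance.

Variables (R : comNzRingType) (T : comUnitRingType) (f : {rmorphism R -> T}).
Variables (N : T -> Prop) (S : (R -> Prop) -> T -> Prop).

Hypothesis N_submod : Rsubmodule f N.
Hypothesis S_submod : forall A, is_ideal A -> Rsubmodule f (S A).
Hypothesis S_mono : forall (A B : R -> Prop) x, (forall r, A r -> B r) -> S A x -> S B x.
Hypothesis S_base : forall A r x, is_ideal A -> A r -> N x -> S A (f r * x).
Hypothesis S_proper : forall A, is_ideal A -> ~ A 1 -> exists x, N x /\ ~ S A x.

Definition avoids n (A : 'I_n -> R -> Prop) x := N x /\ forall k, ~ S (A k) x.

Lemma S_addK A x y : is_ideal A -> S A (x + y) -> S A y -> S A x.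
Proof.
move=> idA Sxy Sy; have [_ SD SM] := S_submod idA.
have -> : x = (x + y) + f (-1) * y by rewrite rmorphN1 mulN1r addrK.
by apply: SD => //; apply: SM.
Qed.

Lemma avoids_comaximal n (A : 'I_n.+1 -> R -> Prop) x :
  (forall k, is_ideal (A k)) -> ~ A ord0 1 ->
  (forall k, ideal_add (A (lift ord0 k)) (A ord0) 1) ->
  avoids (A \o lift ord0) x -> exists x, avoids A x.
Proof.
move=> idA A0_proper comax [Nx x_avoids].
have [w [Nw w_out]] := S_proper (idA ord0) A0_proper.
have [e [Ae A0e]] := comaximal_family (fun k => idA _) (idA ord0) comax.
have [_ ND NM] := N_submod.
have [Sx0|x_out0] := classic (S (A ord0) x); last first.
  by exists x; split=> // j; case: (unliftP ord0 j) => [k|] ->; [apply: x_avoids|].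
exists (x + f e * w); split; first by apply: ND => //; apply: NM.
move=> j; case: (unliftP ord0 j) => [k|] -> Sj.
- apply: (x_avoids k); apply: S_addK Sj _ => //.
  by apply: S_base.
- apply: w_out.
  have Sew : S (A ord0) (f e * w) by rewrite addrC in Sj; apply: S_addK Sj Sx0.
  have -> : w = f (1 - e) * w + f e * w by rewrite -mulrDl -rmorphD subrK rmorph1 mul1r.
  have [_ SD _] := S_submod (idA ord0).
  by apply: SD => //; apply: S_base.
Qed.

Lemma avoids_merge n (A : 'I_n.+1 -> R -> Prop) k :
  (forall B : 'I_n -> R -> Prop, (forall i, is_ideal (B i)) -> (forall i, ~ B i 1) ->
     exists x, avoids B x) ->
  (forall k, is_ideal (A k)) -> (forall k, ~ A k 1) ->
  ~ ideal_add (A (lift ord0 k)) (A ord0) 1 -> exists x, avoids A x.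
Proof.
move=> IH idA A_proper merged_proper.
pose B i := if i == k then ideal_add (A (lift ord0 i)) (A ord0) else A (lift ord0 i).
have [||x [Nx x_avoids]] := IH B.
- by move=> i; rewrite /B; case: ifP => _; [apply: ideal_add_ideal|].
- by move=> i; rewrite /B; case: ifP => [/eqP->|_].
exists x; split=> // j; case: (unliftP ord0 j) => [i|] -> Sj.
- apply: (x_avoids i); rewrite /B; case: ifP => // _.
  by apply: S_mono Sj => r; apply: ideal_addl (idA _).
- apply: (x_avoids k); rewrite /B eqxx.
  by apply: S_mono Sj => r; apply: ideal_addr (idA _).
Qed.

Theorem ideal_family_avoidance n (A : 'I_n -> R -> Prop) :
  (forall k, is_ideal (A k)) -> (forall k, ~ A k 1) -> exists x, avoids A x.
Proof.
elim: n A => [|n IH] A idA A_proper.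
  by exists 0; split=> [|[]//]; case: N_submod.
have [[k merged_proper]|comax] :=
  classic (exists k, ~ ideal_add (A (lift ord0 k)) (A ord0) 1).
  exact: avoids_merge IH idA A_proper merged_proper.
have [x x_avoids] := IH (A \o lift ord0) (fun k => idA _) (fun k => A_proper _).
apply: avoids_comaximal x_avoids => // k.
by apply: NNPP => not_comax; apply: comax; exists k.
Qed.

End Avoidance.

Section Transporter.

Variables (R : comNzRingType) (T : comUnitRingType) (f : {rmorphism R -> T}).
Variables (I J : T -> Prop).

Hypothesis prod_IJ : forall x y, I x -> J y -> exists r, x * y = f r.

Definition transporter (A : R -> Prop) : T -> Prop :=
  fun x => forall y, J y -> exists r, A r /\ x * y = f r.

Definition colon_ideal (M : T -> Prop) : R -> Prop :=
  fun r => forall x, I x -> M (f r * x).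

Lemma transporter_submod A : is_ideal A -> Rsubmodule f (transporter A).
Proof.
case=> A0 AD AM; split.
- by move=> y _; exists 0; rewrite mul0r rmorph0.
- move=> x x' Sx Sx' y Jy; rewrite mulrDl.
  have [r [Ar ->]] := Sx y Jy; have [r' [Ar' ->]] := Sx' y Jy.
  by exists (r + r'); rewrite rmorphD; split; first apply: AD.
- move=> s x Sx y Jy; have [r [Ar e]] := Sx y Jy.
  by exists (s * r); rewrite rmorphM -e mulrA; split; first apply: AM.
Qed.

Lemma transporter_mono (A B : R -> Prop) x :
  (forall r, A r -> B r) -> transporter A x -> transporter B x.
Proof. by move=> AB Sx y Jy; have [r [/AB Br e]] := Sx y Jy; exists r. Qed.

Lemma transporter_base A r x : is_ideal A -> A r -> I x -> transporter A (f r * x).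
Proof.
case=> _ _ AM Ar Ix y Jy; have [s e] := prod_IJ Ix Jy.
by exists (s * r); rewrite rmorphM -e; split; [apply: AM | ring].
Qed.

Lemma transporter_proper A :
  injective f -> ideal_prod I J 1 -> is_ideal A -> ~ A 1 ->
  exists x, I x /\ ~ transporter A x.
Proof.
move=> finj [m [xs [ys [Ixs Jys one_sum]]]] [A0 AD _] A1.
apply: NNPP => no_out; apply: A1.
have /fin_all_exists [r Ar] : forall i, exists r, A r /\ xs i * ys i = f r.
  by move=> i; apply: NNPP => not_in; apply: no_out; exists (xs i); split=> // /(_ _ (Jys i)).
have -> : (1 : R) = \sum_(i < m) r i.
  by apply: finj; rewrite rmorph1 one_sum rmorph_sum; apply: eq_bigr => i _; apply: (Ar i).2.
by apply: big_ind => // i _; apply: (Ar i).1.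
Qed.

Lemma colon_ideal_ideal M : Rsubmodule f M -> is_ideal (colon_ideal M).
Proof.
case=> M0 MD MM; split.
- by move=> x _; rewrite rmorph0 mul0r.
- by move=> a b Ma Mb x Ix; rewrite rmorphD mulrDl; apply: MD; [apply: Ma|apply: Mb].
- by move=> r a Ma x Ix; rewrite rmorphM -mulrA; apply: MM; apply: Ma.
Qed.

Lemma transporter_colon M x :
  Rsubmodule f M -> I x -> M x -> transporter (colon_ideal M) x.
Proof.
case=> _ _ MM Ix Mx y Jy; have [r e] := prod_IJ Ix Jy; exists r; split=> // z Iz.
have [s es] := prod_IJ Iz Jy.
have -> : f r * z = f s * x by rewrite -e -es; ring.
exact: MM.
Qed.

End Transporter.

Theorem corollary3p2 (R : comNzRingType) (T : comUnitRingType)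
    (f : {rmorphism R -> T}) (hT : total_ring_of_fractions f)
    (I : T -> Prop) (hI : invertible_fractional_ideal f I)
    (n : nat) (M : 'I_n -> T -> Prop)
    (hM : forall k, Rsubmodule f (M k))
    (hU : forall x, I x <-> exists k, M k x) :
  exists k : 'I_n, forall x, I x <-> M k x.
Proof.
have [finj _ _] := hT.
case: hI => [[I_submod _] [J [_ IJ_eq]]].
have prod_IJ x y : I x -> J y -> exists r, x * y = f r.
  by move=> Ix Jy; apply/IJ_eq; exists 1%N, (fun=> x), (fun=> y); rewrite big_ord1.
have one_IJ : ideal_prod I J 1 by apply/IJ_eq; exists 1; rewrite rmorph1.
apply: NNPP => no_k.
have colon_proper k : ~ colon_ideal f I (M k) 1.
  move=> I_in_Mk; apply: no_k; exists k => x; split=> [Ix|Mx]; last by apply/hU; exists k.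
  by have := I_in_Mk x Ix; rewrite rmorph1 mul1r.
have [x [Ix x_out]] := ideal_family_avoidance I_submod (@transporter_submod _ _ f J)
  (@transporter_mono _ _ f J) (transporter_base prod_IJ)
  (fun A => transporter_proper finj one_IJ)
  (fun k => colon_ideal_ideal I (hM k)) colon_proper.
have [k Mkx] := (hU x).1 Ix.
exact: x_out k (transporter_colon prod_IJ (hM k) Ix Mkx).
Qed.
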